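(* Let $L\in\mathbb N$ satisfy $\operatorname{rank}\mathcal O_L(\Sigma_s)=n$ and let $K=[A_L,\dots,A_1,B_L,\dots,B_1]\in\mathbb R^{m\times L(m+r)}$ with $A_i\in\mathbb R^{m\times m}$, $B_i\in\mathbb R^{m\times r}$. Consider the dynamic output feedback controller $\mathbf K_s$: $\xi(t+1)=\Xi\xi(t)+\Lambda y(t)$, $u(t)=\Omega\xi(t)$, $\xi\in\mathbb R^{Lm}$, $t\ge0$, where $\Xi\in\mathbb R^{Lm\times Lm}$ has $I_m$ in blocks $(k+1,k)$, $k=1,\dots,L-1$, last block column $[A_L;A_{L-1};\dots;A_1]$, and zeros elsewhere; $\Lambda=[B_L;B_{L-1};\dots;B_1]$; $\Omega=[0,\dots,0,I_m]$; and $\xi(0)=\mathcal O_L(\mathbf K_s)^{-1}[I,\,-\mathcal H_L(\mathbf K_s)]\,v(L)$, where $\mathcal O_L(\mathbf K_s)=[\Omega^\top,(\Omega\Xi)^\top,\dots,(\Omega\Xi^{L-1})^\top]^\top$ and $\mathcal H_L(\mathbf K_s)$ is the block lower-triangular Toeplitz matrix with $(i,j)$ block $G_{i-j}$, $G_0=0$, $G_k=\Omega\Xi^{k-1}\Lambda$. Then the signals $u$ and $y$ of the closed loop of the IOH system $v(t+1)=\Theta v(t)+\Pi u(t)$, $y(t)=C\Gamma v(t)$ with the IOH feedback $u(t)=Kv(t)$, $t\ge L$, are identical to those of the feedback interconnection of $\Sigma_s$ and $\mathbf K_s$.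
   Context: System $\Sigma_s$: $x(t+1)=Ax(t)+Bu(t)$, $y(t)=Cx(t)$, $t\ge0$, $x\in\mathbb R^n,u\in\mathbb R^m,y\in\mathbb R^r$; standing assumptions: $(A,B,C)$ minimal and $A$ Schur. $\mathcal R_L(\Sigma_s)=[A^{L-1}B,\dots,B]$, $\mathcal O_L(\Sigma_s)=[C^\top,\dots,(CA^{L-1})^\top]^\top$, $\mathcal H_L(\Sigma_s)$ the $Lr\times Lm$ block lower-triangular Toeplitz matrix with $(i,j)$ block $H_{i-j}$, $H_0=0$, $H_k=CA^{k-1}B$. IOH: $v(t)=[u(t-L)^\top,\dots,u(t-1)^\top,y(t-L)^\top,\dots,y(t-1)^\top]^\top\in\mathbb R^{L(m+r)}$, $t\ge L$; $v(L)$ is the IOH at time $L$ (common to both loops). $\Gamma=[\mathcal R_L-A^L\mathcal O_L^\dagger\mathcal H_L,\ A^L\mathcal O_L^\dagger]$; $\Theta=\mathrm{diag}(S_m,S_r)+EC\Gamma$, with $S_k$ the $Lk\times Lk$ block matrix having $I_k$ in blocks $(i,i+1)$, $i<L$, zeros elsewhere, $E$ having $I_r$ in its last $r$ rows, zeros elsewhere; $\Pi\in\mathbb R^{L(m+r)\times m}$ has $I_m$ in rows $(L-1)m+1,\dots,Lm$, zeros elsewhere. *)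

(* Real-closed field R (covers the reals); complex numbers R[i]
   from mathcomp-real-closed are used only to state the Schur property. *)
From HB Require Import structures.
From mathcomp Require Import all_boot all_order all_algebra.
From mathcomp Require Import complex.
Set Implicit Arguments. Unset Strict Implicit. Unset Printing Implicit Defensive.
Import Order.TTheory GRing.Theory Num.Theory.
Local Open Scope ring_scope.

Section Defs.
Variable R : rcfType.

(* total entry access with nat indices (0 outside the range) *)
Definition mxget p q (M : 'M[R]_(p, q)) (a b : nat) : R :=
  match @insub _ (fun k => k < p)%N 'I_p a, @insub _ (fun k => k < q)%N 'I_q b with
  | Some i, Some j => M i j
  | _, _ => 0
  end.

(* block matrices, blocks indexed from 0 *)
Definition blk p q (P Q : nat) (F : nat -> nat -> 'M[R]_(p, q)) : 'M[R]_(P * p, Q * q) :=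
  \matrix_(i < P * p, j < Q * q) mxget (F (i %/ p) (j %/ q))%N (i %% p)%N (j %% q)%N.
Definition blkcol p q (P : nat) (F : nat -> 'M[R]_(p, q)) : 'M[R]_(P * p, q) :=
  \matrix_(i < P * p, j < q) mxget (F (i %/ p))%N (i %% p)%N j.
Definition blkrow p q (Q : nat) (F : nat -> 'M[R]_(p, q)) : 'M[R]_(p, Q * q) :=
  \matrix_(i < p, j < Q * q) mxget (F (j %/ q))%N i (j %% q)%N.

(* generic system (A,B,C): x+ = A x + B u, y = C x, with n states, m inputs, r outputs *)
Definition reachL n m (L : nat) (A : 'M[R]_n) (B : 'M[R]_(n, m)) : 'M[R]_(n, L * m) :=
  blkrow L (fun j => A ^+ (L - 1 - j) *m B).
Definition obsvL n r (L : nat) (A : 'M[R]_n) (C : 'M[R]_(r, n)) : 'M[R]_(L * r, n) :=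
  blkcol L (fun i => C *m A ^+ i).
Definition toepL n m r (L : nat) (A : 'M[R]_n) (B : 'M[R]_(n, m)) (C : 'M[R]_(r, n))
  : 'M[R]_(L * r, L * m) :=
  blk L L (fun i j => if (j < i)%N then C *m A ^+ (i - j - 1) *m B else 0).

Definition is_pinv p q (M : 'M[R]_(p, q)) (X : 'M[R]_(q, p)) : Prop :=
  [/\ M *m X *m M = M, X *m M *m X = X, (M *m X)^T = M *m X & (X *m M)^T = X *m M].

Definition minimal n m r (A : 'M[R]_n) (B : 'M[R]_(n, m)) (C : 'M[R]_(r, n)) : Prop :=
  \rank (reachL n A B) = n /\ \rank (obsvL n A C) = n.
Definition schur n (A : 'M[R]_n) : Prop :=
  forall z : R[i], root (char_poly (map_mx (real_complex R) A)) z -> `|z| < 1.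

Definition GammaM n m r L (A : 'M[R]_n) (B : 'M[R]_(n, m)) (C : 'M[R]_(r, n))
  (Opinv : 'M[R]_(n, L * r)) : 'M[R]_(n, L * m + L * r) :=
  row_mx (reachL L A B - A ^+ L *m Opinv *m toepL L A B C) (A ^+ L *m Opinv).

Definition shiftM k L : 'M[R]_(L * k) := blk L L (fun i j => if j == i.+1 then 1%:M else 0).
Definition EM m r L : 'M[R]_(L * m + L * r, r) :=
  col_mx 0 (blkcol L (fun i => if i == (L - 1)%N then 1%:M else 0)).
Definition PiM m r L : 'M[R]_(L * m + L * r, m) :=
  col_mx (blkcol L (fun i => if i == (L - 1)%N then 1%:M else 0)) 0.
Definition ThetaM n m r L (C : 'M[R]_(r, n)) (Gamma : 'M[R]_(n, L * m + L * r))
  : 'M[R]_(L * m + L * r) :=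
  block_mx (shiftM m L) 0 0 (shiftM r L) + EM m r L *m C *m Gamma.

Definition ioh m r L (u : nat -> 'cV[R]_m) (y : nat -> 'cV[R]_r) (t : nat)
  : 'cV[R]_(L * m + L * r) :=
  col_mx (blkcol L (fun i => u (t - L + i)%N)) (blkcol L (fun i => y (t - L + i)%N)).

Definition gainK m r L (Ak : nat -> 'M[R]_m) (Bk : nat -> 'M[R]_(m, r))
  : 'M[R]_(m, L * m + L * r) :=
  row_mx (blkrow L (fun j => Ak (L - j)%N)) (blkrow L (fun j => Bk (L - j)%N)).

Definition XiM m L (Ak : nat -> 'M[R]_m) : 'M[R]_(L * m) :=
  blk L L (fun i j => (if i == j.+1 then 1%:M else 0)
                      + (if j == (L - 1)%N then Ak (L - i)%N else 0)).
Definition LambdaM m r L (Bk : nat -> 'M[R]_(m, r)) : 'M[R]_(L * m, r) :=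
  blkcol L (fun i => Bk (L - i)%N).
Definition OmegaM m L : 'M[R]_(m, L * m) :=
  blkrow L (fun j => if j == (L - 1)%N then 1%:M else 0).

End Defs.

From HB Require Import structures.
From mathcomp Require Import all_boot all_order all_algebra.
From mathcomp Require Import complex.
From mathcomp Require Import zify.
Set Implicit Arguments. Unset Strict Implicit. Unset Printing Implicit Defensive.
Import Order.TTheory GRing.Theory Num.Theory.
Local Open Scope ring_scope.

(* For t >= L the IOH loop and the interconnection obey the same recursion once the IOH
   v(t) of the interconnection is substituted: Gamma recovers the plant state from v(t)
   (O_L has full column rank, so O_L^+ O_L = I), Theta shifts the history, and K_s
   realizes the ARX law u(t) = K v(t), since unrolling L steps of its recursion expresses
   the last block of its state through the last L inputs and outputs.  Both loops also
   start from the same history: xi(0) solves O_L(K_s) xi(0) = U - H_L(K_s) Y, so the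
   data equation of K_s reads U_c - U = H_L(K_s) (Y_c - Y), and strict lower
   triangularity of H_L(K_s) gives by induction that the interconnection reproduces
   the data (u, y) on [0, L), i.e. its IOH at time L is v(L). *)

Lemma mulmx_exprS (R : pzRingType) n (A : 'M[R]_n) k : A *m A ^+ k = A ^+ k.+1.
Proof. by rewrite exprS mulmxE. Qed.

Section BlockCalculus.
Variable R : rcfType.

Lemma mxgetE p q (M : 'M[R]_(p, q)) (i : 'I_p) (j : 'I_q) : mxget M i j = M i j.
Proof.
rewrite /mxget (insubT (fun k => k < p)%N (ltn_ord i)) (insubT (fun k => k < q)%N (ltn_ord j)).
by congr (M _ _); apply: val_inj.
Qed.

Lemma mxget_in p q (M : 'M[R]_(p, q)) a b (ha : (a < p)%N) (hb : (b < q)%N) :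
  mxget M a b = M (Ordinal ha) (Ordinal hb).
Proof. by rewrite -mxgetE. Qed.

Lemma mxget_outl p q (M : 'M[R]_(p, q)) a b : (p <= a)%N -> mxget M a b = 0.
Proof. by move=> hpa; rewrite /mxget insubN // -leqNgt. Qed.

Lemma mxget_outr p q (M : 'M[R]_(p, q)) a b : (q <= b)%N -> mxget M a b = 0.
Proof. by move=> hqb; rewrite /mxget [insub b]insubN -?leqNgt //; case: insub. Qed.

Lemma mxget_mul p q s (M : 'M[R]_(p, q)) (N : 'M[R]_(q, s)) a c :
  mxget (M *m N) a c = \sum_(k < q) mxget M a k * mxget N k c.
Proof.
have [ha|ha] := ltnP a p; last first.
  by rewrite mxget_outl // big1 // => k _; rewrite mxget_outl // mul0r.
have [hc|hc] := ltnP c s; last first.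
  by rewrite mxget_outr // big1 // => k _; rewrite (mxget_outr N) // mulr0.
rewrite (mxget_in _ ha hc) mxE; apply: eq_bigr => k _.
rewrite (mxget_in _ ha (ltn_ord k)) (mxget_in _ (ltn_ord k) hc).
by congr (M _ _ * N _ _); apply: val_inj.
Qed.

Lemma sum_blocks (V : nmodType) Q q (f : nat -> V) :
  \sum_(k < Q * q) f k = \sum_(j < Q) \sum_(b < q) f (j * q + b)%N.
Proof.
elim: Q => [|Q IH]; first by rewrite mul0n !big_ord0.
rewrite big_ord_recr /= -IH -!(big_mkord xpredT) mulSnr.
rewrite (big_cat_nat _ (leq_addr _ _)) //=; congr (_ + _).
rewrite -{1}[(Q * q)%N]add0n big_addn addKn big_mkord.
by apply: eq_bigr => i _; rewrite addnC.
Qed.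

Lemma divn_modn_block q j b :
  (b < q)%N -> ((j * q + b) %/ q = j /\ (j * q + b) %% q = b)%N.
Proof.
move=> hb; have q_gt0 : (0 < q)%N by apply: leq_ltn_trans hb.
by rewrite divnMDl // modnMDl divn_small // modn_small // addn0.
Qed.

Lemma block_index_lt i a p P : (i < P)%N -> (a < p)%N -> (i * p + a < P * p)%N.
Proof.
move=> hi ha; apply: (@leq_trans (i.+1 * p)); first by rewrite mulSnr ltn_add2l.
by rewrite leq_mul2r hi orbT.
Qed.

Definition vblock p P (v : 'cV[R]_(P * p)) (i : nat) : 'cV[R]_p :=
  \col_(a < p) mxget v (i * p + a)%N 0.

Lemma vblockE p P (v : 'cV[R]_(P * p)) i (a : 'I_p) (ha : (i * p + a < P * p)%N) :
  vblock v i a 0 = v (Ordinal ha) 0.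
Proof. by rewrite mxE; exact: (mxgetE v (Ordinal ha) 0). Qed.

Lemma vblock_blkcol p P (F : nat -> 'cV[R]_p) i : (i < P)%N -> vblock (blkcol P F) i = F i.
Proof.
move=> hi; apply/matrixP => a j.
rewrite ord1 (vblockE _ (block_index_lt hi (ltn_ord a))) mxE.
by have [-> ->] := divn_modn_block i (ltn_ord a); rewrite (mxgetE _ a 0).
Qed.

Lemma vblock_inj p P (v w : 'cV[R]_(P * p)) :
  (forall i, (i < P)%N -> vblock v i = vblock w i) -> v = w.
Proof.
move=> eq_vw; apply/matrixP => k j; rewrite ord1.
have p_gt0 : (0 < p)%N.
  by move: (leq_ltn_trans (leq0n k) (ltn_ord k)); rewrite muln_gt0 => /andP[].
have hi : (k %/ p < P)%N by rewrite ltn_divLR.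
move/matrixP/(_ (Ordinal (ltn_pmod k p_gt0)) 0): (eq_vw _ hi); rewrite !mxE /= -divn_eq.
by rewrite !(mxgetE _ k 0).
Qed.

Lemma vblockD p P (v w : 'cV[R]_(P * p)) i : vblock (v + w) i = vblock v i + vblock w i.
Proof.
apply/matrixP => a j; rewrite !mxE.
have [h|h] := ltnP (i * p + a) (P * p); last by rewrite !mxget_outl // addr0.
by rewrite !(mxget_in _ h (ltn_ord (0 : 'I_1))) mxE.
Qed.

Lemma vblockN p P (v : 'cV[R]_(P * p)) i : vblock (- v) i = - vblock v i.
Proof.
apply/matrixP => a j; rewrite !mxE.
have [h|h] := ltnP (i * p + a) (P * p); last by rewrite !mxget_outl // oppr0.
by rewrite !(mxget_in _ h (ltn_ord (0 : 'I_1))) mxE.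
Qed.

Lemma vblock0 p P i : vblock (0 : 'cV[R]_(P * p)) i = 0.
Proof.
apply/matrixP => a j; rewrite !mxE.
have [h|h] := ltnP (i * p + a) (P * p); last by rewrite mxget_outl.
by rewrite (mxget_in _ h (ltn_ord (0 : 'I_1))) mxE.
Qed.

Lemma vblock_blk_mul p q P Q (F : nat -> nat -> 'M[R]_(p, q)) (w : 'cV[R]_(Q * q)) i :
  (i < P)%N -> vblock (blk P Q F *m w) i = \sum_(j < Q) F i j *m vblock w j.
Proof.
move=> hi; apply/matrixP => a c; rewrite ord1 mxE mxget_mul summxE.
rewrite (sum_blocks Q q (fun k => mxget (blk P Q F) (i * p + a) k * mxget w k 0)).
apply: eq_bigr => j _; rewrite !mxE; apply: eq_bigr => b _.
have hb := block_index_lt (ltn_ord j) (ltn_ord b).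
rewrite (mxget_in _ (block_index_lt hi (ltn_ord a)) hb) mxE /= mxE.
have [-> ->] := divn_modn_block i (ltn_ord a).
by have [-> ->] := divn_modn_block j (ltn_ord b); rewrite mxgetE.
Qed.

Lemma blkrow_mul p q Q (F : nat -> 'M[R]_(p, q)) (w : 'cV[R]_(Q * q)) :
  blkrow Q F *m w = \sum_(j < Q) F j *m vblock w j.
Proof.
apply/matrixP => a c; rewrite ord1 -(mxgetE _ a 0) mxget_mul summxE.
rewrite (sum_blocks Q q (fun k => mxget (blkrow Q F) a k * mxget w k 0)).
apply: eq_bigr => j _; rewrite !mxE; apply: eq_bigr => b _.
have hb := block_index_lt (ltn_ord j) (ltn_ord b).
rewrite (mxget_in _ (ltn_ord a) hb) mxE /= mxE.
by have [-> ->] := divn_modn_block j (ltn_ord b); rewrite mxgetE.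
Qed.

Lemma blkcol_mul p q s P (F : nat -> 'M[R]_(p, q)) (M : 'M[R]_(q, s)) :
  blkcol P F *m M = blkcol P (fun i => F i *m M).
Proof.
apply/matrixP => a c; rewrite -mxgetE mxget_mul mxE mxget_mul.
by apply: eq_bigr => k _; rewrite (mxget_in _ (ltn_ord a) (ltn_ord k)) mxE.
Qed.

Lemma eq_blkcol p q P (F G : nat -> 'M[R]_(p, q)) :
  (forall i, (i < P)%N -> F i = G i) -> blkcol P F = blkcol P G.
Proof.
move=> eqFG; apply/matrixP => k j; rewrite !mxE.
have p_gt0 : (0 < p)%N.
  by move: (leq_ltn_trans (leq0n k) (ltn_ord k)); rewrite muln_gt0 => /andP[].
by rewrite eqFG // ltn_divLR.
Qed.

Lemma sum_block_select (V : nmodType) L k (G : nat -> V) :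
  \sum_(j < L) (if nat_of_ord j == k then G j else 0) = if (k < L)%N then G k else 0.
Proof. by rewrite -big_mkcond big_ord1_eq. Qed.

End BlockCalculus.

Lemma full_col_rank_ginvK (R : fieldType) p q (M : 'M[R]_(p, q)) X :
  \rank M = q -> M *m X *m M = M -> X *m M = 1%:M.
Proof.
move=> rkM MXM; have freeMT : row_free M^T by rewrite /row_free mxrank_tr rkM.
apply/eqP; rewrite -subr_eq0 -trmx_eq0 -(mulmx_free_eq0 _ freeMT) -trmx_mul.
by rewrite mulmxBr mulmxA MXM mulmx1 subrr trmx0.
Qed.

Section LinearSystem.
Variables (R : rcfType) (n m r : nat).
Variables (A : 'M[R]_n) (B : 'M[R]_(n, m)) (C : 'M[R]_(r, n)).

Definition window k L (w : nat -> 'cV[R]_k) s : 'cV[R]_(L * k) :=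
  blkcol L (fun i => w (s + i)%N).

Lemma vblock_obsv L (x : 'cV[R]_n) i :
  (i < L)%N -> vblock (obsvL L A C *m x) i = C *m A ^+ i *m x.
Proof. by move=> hi; rewrite blkcol_mul vblock_blkcol. Qed.

Lemma vblock_toep L (w : 'cV[R]_(L * m)) i : (i < L)%N ->
  vblock (toepL L A B C *m w) i =
  \sum_(j < L | (j < i)%N) C *m A ^+ (i - j - 1) *m B *m vblock w j.
Proof.
move=> hi; rewrite vblock_blk_mul // [RHS]big_mkcond /=.
by apply: eq_bigr => j _; case: ifP; rewrite ?mul0mx.
Qed.

Lemma vblock_toep_causal L (w : 'cV[R]_(L * m)) i : (i < L)%N ->
  (forall j, (j < i)%N -> vblock w j = 0) -> vblock (toepL L A B C *m w) i = 0.
Proof. by move=> hi w0; rewrite vblock_toep // big1 // => j /w0 ->; rewrite mulmx0. Qed.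

Lemma reach_window L (u : nat -> 'cV[R]_m) s :
  reachL L A B *m window L u s = \sum_(j < L) A ^+ (L - 1 - j) *m B *m u (s + j)%N.
Proof. by rewrite blkrow_mul; apply: eq_bigr => j _; rewrite vblock_blkcol. Qed.

Variables (x : nat -> 'cV[R]_n) (u : nat -> 'cV[R]_m) (y : nat -> 'cV[R]_r).
Hypothesis hx : forall t, x t.+1 = A *m x t + B *m u t.
Hypothesis hy : forall t, y t = C *m x t.

Lemma trajectory_addn s k :
  x (s + k)%N = A ^+ k *m x s + \sum_(j < k) A ^+ (k - 1 - j) *m B *m u (s + j)%N.
Proof.
elim: k => [|k IH]; first by rewrite addn0 big_ord0 expr0 mul1mx addr0.
rewrite addnS hx IH big_ord_recr /= mulmxDr mulmxA mulmx_exprS addrA subSS subn0 subnn.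
rewrite expr0 mul1mx mulmx_sumr; congr (_ + _ + _); apply: eq_bigr => j _.
by rewrite !mulmxA mulmx_exprS; congr (A ^+ _ *m _ *m _); have := ltn_ord j; lia.
Qed.

Lemma data_equation L s :
  window L y s = obsvL L A C *m x s + toepL L A B C *m window L u s.
Proof.
apply: vblock_inj => i hi; rewrite vblockD vblock_blkcol // vblock_obsv // vblock_toep //.
rewrite hy trajectory_addn mulmxDr mulmxA; congr (_ + _).
rewrite mulmx_sumr.
rewrite (big_ord_widen L (fun j => C *m (A ^+ (i - 1 - j) *m B *m u (s + j)%N)) (ltnW hi)).
apply: eq_bigr => j hj; rewrite vblock_blkcol // !mulmxA; congr (C *m A ^+ _ *m B *m _).
by rewrite subnAC.
Qed.

Lemma GammaM_ioh L (Opinv : 'M[R]_(n, L * r)) :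
  \rank (obsvL L A C) = n -> is_pinv (obsvL L A C) Opinv ->
  forall t, (L <= t)%N -> GammaM A B C Opinv *m ioh L u y t = x t.
Proof.
move=> rkO [OpO _ _ _] t hLt; have OpinvK := full_col_rank_ginvK rkO OpO.
rewrite /GammaM /ioh mul_row_col -/(window L u _) -/(window L y _) data_equation.
rewrite mulmxBl addrC !mulmxDr -!mulmxA -addrA [_ + (_ - _)]addrC subrK.
rewrite (mulmxA Opinv) OpinvK mul1mx.
by rewrite -{3}(subnK hLt) trajectory_addn reach_window addrC.
Qed.

End LinearSystem.

Section InputOutputHistory.
Variables (R : rcfType) (m r L : nat).

Lemma vblock_shift k (v : 'cV[R]_(L * k)) i : (i < L)%N ->
  vblock (shiftM R k L *m v) i = if (i.+1 < L)%N then vblock v i.+1 else 0.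
Proof.
move=> hi; rewrite vblock_blk_mul // -sum_block_select.
by apply: eq_bigr => j _; rewrite eq_sym; case: eqP; rewrite ?mul1mx ?mul0mx.
Qed.

Lemma window_succ k (w : nat -> 'cV[R]_k) s :
  window L w s.+1 = shiftM R k L *m window L w s
                    + blkcol L (fun i => if i == (L - 1)%N then 1%:M else 0) *m w (s + L)%N.
Proof.
apply: vblock_inj => i hi; rewrite vblockD blkcol_mul !vblock_blkcol // vblock_shift //.
have [hiL|hiL] := ltnP i.+1 L.
  by rewrite vblock_blkcol // ifF ?mul0mx ?addr0 ?addnS //; apply/negbTE; lia.
by rewrite ifT ?mul1mx ?add0r; [congr w; lia | lia].
Qed.

Lemma ioh_succ n (C : 'M[R]_(r, n)) (Gam : 'M[R]_(n, L * m + L * r)) u y t :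
  (L <= t)%N -> y t = C *m (Gam *m ioh L u y t) ->
  ioh L u y t.+1 = ThetaM C Gam *m ioh L u y t + PiM R m r L *m u t.
Proof.
move=> hLt hy.
have -> : ioh L u y t.+1 = col_mx (window L u (t - L).+1) (window L y (t - L).+1).
  by rewrite /ioh subSn.
rewrite !window_succ subnK // /ThetaM mulmxDl -!mulmxA -hy /ioh /EM /PiM.
by rewrite mul_block_col !mul_col_mx !mul0mx !add_col_mx !addr0 add0r.
Qed.

End InputOutputHistory.

Section ArxController.
Variables (R : rcfType) (m r L : nat).
Variables (Ak : nat -> 'M[R]_m) (Bk : nat -> 'M[R]_(m, r)).

Lemma OmegaM_mul (w : 'cV[R]_(L * m)) :
  (0 < L)%N -> OmegaM R m L *m w = vblock w (L - 1).
Proof.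
move=> L_gt0; rewrite blkrow_mul.
rewrite (eq_bigr (fun j : 'I_L => if nat_of_ord j == (L - 1)%N then vblock w j else 0)).
  by rewrite sum_block_select ifT //; lia.
by move=> j _; case: ifP; rewrite ?mul1mx ?mul0mx.
Qed.

Lemma vblock_LambdaM (v : 'cV[R]_r) i :
  (i < L)%N -> vblock (LambdaM L Bk *m v) i = Bk (L - i)%N *m v.
Proof. by move=> hi; rewrite blkcol_mul vblock_blkcol. Qed.

Lemma vblock_XiM (w : 'cV[R]_(L * m)) i : (i < L)%N ->
  vblock (XiM L Ak *m w) i =
  (if (0 < i)%N then vblock w i.-1 else 0) + Ak (L - i)%N *m vblock w (L - 1).
Proof.
move=> hi; rewrite vblock_blk_mul //.
under eq_bigr => j _ do rewrite mulmxDl.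
rewrite big_split /=; congr (_ + _).
  case: i hi => [|i] hi /=; first by rewrite big1 // => j _; rewrite mul0mx.
  rewrite (eq_bigr (fun j : 'I_L => if nat_of_ord j == i then vblock w j else 0)).
    by rewrite sum_block_select ltnW.
  by move=> j _; rewrite eqSS eq_sym; case: eqP; rewrite ?mul1mx ?mul0mx.
pose G j := Ak (L - i)%N *m vblock w j.
rewrite (eq_bigr (fun j : 'I_L => if nat_of_ord j == (L - 1)%N then G j else 0)).
  by rewrite (sum_block_select _ _ G) ifT //; lia.
by move=> j _; case: ifP; rewrite ?mul0mx.
Qed.

Variables (xi : nat -> 'cV[R]_(L * m)) (u : nat -> 'cV[R]_m) (y : nat -> 'cV[R]_r).
Hypothesis hxi : forall t, xi t.+1 = XiM L Ak *m xi t + LambdaM L Bk *m y t.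
Hypothesis hu : forall t, u t = OmegaM R m L *m xi t.

Lemma vblock_controller_succ t i : (i < L)%N ->
  vblock (xi t.+1) i = (if (0 < i)%N then vblock (xi t) i.-1 else 0)
                       + Ak (L - i)%N *m u t + Bk (L - i)%N *m y t.
Proof.
move=> hi; rewrite hxi vblockD vblock_XiM // vblock_LambdaM // hu OmegaM_mul //.
exact: leq_ltn_trans hi.
Qed.

Lemma vblock_controller_addn s k i : (i < L)%N -> (k <= i.+1)%N ->
  vblock (xi (s + k)) i = (if (k <= i)%N then vblock (xi s) (i - k) else 0)
    + \sum_(l < k) (Ak (L - i + l)%N *m u (s + k - 1 - l)%N
                    + Bk (L - i + l)%N *m y (s + k - 1 - l)%N).
Proof.
elim: k i => [|k IH] i hi hk; first by rewrite addn0 big_ord0 addr0 subn0.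
rewrite addnS vblock_controller_succ //; case: i hi hk => [|i] hi hk.
  have -> : k = 0%N by lia.
  by rewrite big_ord1 /= !add0r !addn0 !subn0 subn1.
rewrite /= (IH i) ?(ltnW hi) // big_ord_recl /= ltnS subSS -!addrA; congr (_ + _).
rewrite addrC -addrA; congr (_ + _); first by rewrite addn0 subn1 subn0.
congr (_ + _); first by rewrite addn0 subn1 subn0.
apply: eq_bigr => l _; rewrite /bump leq0n add1n.
by congr (Ak _ *m u _ + Bk _ *m y _); lia.
Qed.

Lemma controller_arx t : (L <= t)%N -> u t = gainK L Ak Bk *m ioh L u y t.
Proof.
move=> hLt; rewrite /gainK /ioh mul_row_col !blkrow_mul -big_split /=.
have [L0|L_gt0] := posnP L.
  by rewrite hu /OmegaM blkrow_mul !big1 // => -[j hj] _; exfalso; rewrite L0 in hj.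
rewrite hu OmegaM_mul // -{1}(subnK hLt) (@vblock_controller_addn _ L (L - 1)); [|lia|lia].
rewrite ifF; last by lia.
rewrite add0r (reindex_inj rev_ord_inj) /=; apply: eq_bigr => j _.
rewrite !vblock_blkcol //; congr (Ak _ *m u _ + Bk _ *m y _); have := ltn_ord j; lia.
Qed.

End ArxController.

Lemma unitmx_ker0 (R : fieldType) N (M : 'M[R]_N) :
  (forall v : 'cV[R]_N, M *m v = 0 -> v = 0) -> M \in unitmx.
Proof.
move=> Minj; rewrite -unitmx_tr -row_free_unit; apply: inj_row_free => v.
by move/(congr1 trmx); rewrite trmx_mul trmxK trmx0 => /Minj/(congr1 trmx); rewrite trmxK trmx0.
Qed.

(* Unrolling the controller recursion from [w] with zero input, its output at time
   [L - 1 - i] is block [i] of [w]. *)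
Lemma obsvL_controller_unitmx (R : rcfType) m L (Ak : nat -> 'M[R]_m) :
  obsvL L (XiM L Ak) (OmegaM R m L) \in unitmx.
Proof.
apply: unitmx_ker0 => w Ow0.
pose xi k := XiM L Ak ^+ k *m w; pose u k := OmegaM R m L *m xi k.
have hxi k : xi k.+1 = XiM L Ak *m xi k + LambdaM L (fun _ => 0 : 'M[R]_(m, 0)) *m 0.
  by rewrite mulmx0 addr0 mulmxA mulmx_exprS.
have u0 k : (k < L)%N -> u k = 0.
  by move=> hk; rewrite /u /xi mulmxA -(vblock_obsv _ _ w hk) Ow0 vblock0.
apply: vblock_inj => i hi; rewrite vblock0.
have hL : (L - 1 < L)%N by lia.
have hk : (L - 1 - i <= (L - 1).+1)%N by lia.
have := @vblock_controller_addn R m 0 L Ak _ xi u _ hxi (fun _ => erefl)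
  0 (L - 1 - i) (L - 1) hL hk.
rewrite add0n ifT ?leq_subr // (_ : L - 1 - (L - 1 - i) = i)%N; last by lia.
rewrite big1 => [|l _]; last by rewrite u0 ?mulmx0 ?addr0 //; have := ltn_ord l; lia.
rewrite addr0 /xi expr0 mul1mx -OmegaM_mul; last by lia.
by rewrite -/(xi _) -/(u _) u0 => [/esym | ]; last lia.
Qed.

Lemma state_eq_upto (R : rcfType) n m (A : 'M[R]_n) (B : 'M[R]_(n, m))
    (x1 x2 : nat -> 'cV[R]_n) (u1 u2 : nat -> 'cV[R]_m) :
  x1 0%N = x2 0%N ->
  (forall t, x1 t.+1 = A *m x1 t + B *m u1 t) -> (forall t, x2 t.+1 = A *m x2 t + B *m u2 t) ->
  forall t, (forall j, (j < t)%N -> u1 j = u2 j) -> x1 t = x2 t.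
Proof.
move=> eq_x0 hx1 hx2; elim=> [//|t IH] eq_u.
by rewrite hx1 hx2 IH ?eq_u // => j hj; apply: eq_u; apply: ltnW.
Qed.

Section Interconnection.
Variables (R : rcfType) (n m r L : nat).
Variables (A : 'M[R]_n) (B : 'M[R]_(n, m)) (C : 'M[R]_(r, n)).
Variables (Ak : nat -> 'M[R]_m) (Bk : nat -> 'M[R]_(m, r)).
Variables (xd : nat -> 'cV[R]_n) (ud : nat -> 'cV[R]_m) (yd : nat -> 'cV[R]_r).
Variables (xc : nat -> 'cV[R]_n) (xic : nat -> 'cV[R]_(L * m)).
Variables (uc : nat -> 'cV[R]_m) (yc : nat -> 'cV[R]_r).
Hypothesis hxd : forall t, xd t.+1 = A *m xd t + B *m ud t.
Hypothesis hyd : forall t, yd t = C *m xd t.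
Hypothesis xc0 : xc 0%N = xd 0%N.
Hypothesis xic0 : xic 0%N = invmx (obsvL L (XiM L Ak) (OmegaM R m L))
  *m row_mx 1%:M (- toepL L (XiM L Ak) (LambdaM L Bk) (OmegaM R m L)) *m ioh L ud yd L.
Hypothesis hxc : forall t, xc t.+1 = A *m xc t + B *m uc t.
Hypothesis hyc : forall t, yc t = C *m xc t.
Hypothesis hxic : forall t, xic t.+1 = XiM L Ak *m xic t + LambdaM L Bk *m yc t.
Hypothesis huc : forall t, uc t = OmegaM R m L *m xic t.

Lemma obsvL_controller_xic0 :
  obsvL L (XiM L Ak) (OmegaM R m L) *m xic 0%N
  = window L ud 0 - toepL L (XiM L Ak) (LambdaM L Bk) (OmegaM R m L) *m window L yd 0.
Proof.
rewrite xic0 !mulmxA mulmxV ?obsvL_controller_unitmx // mul1mx.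
by rewrite /ioh subnn mul_row_col mul1mx mulNmx.
Qed.

Lemma interconnection_agrees_with_data t : (t < L)%N -> uc t = ud t /\ yc t = yd t.
Proof.
elim/ltn_ind: t => t IH htL.
have eq_y j : (j <= t)%N -> yc j = yd j.
  move=> hj; rewrite hyc hyd (state_eq_upto xc0 hxc hxd) // => k hk.
  by apply: (proj1 (IH k _ _)); lia.
split; last exact: eq_y.
have := congr1 (fun v => vblock v t) (data_equation hxic huc L 0).
rewrite obsvL_controller_xic0 addrAC -addrA -mulmxBr !vblockD !vblock_blkcol //.
rewrite vblock_toep_causal ?addr0 // => j hj.
by rewrite vblockD vblockN !vblock_blkcol ?eq_y ?subrr //; lia.
Qed.

Lemma ioh_interconnection : ioh L uc yc L = ioh L ud yd L.
Proof.
rewrite /ioh subnn; congr col_mx; apply: eq_blkcol => i /interconnection_agrees_with_data [].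
  by move=> ->.
by move=> _ ->.
Qed.

End Interconnection.

Theorem lemma2 (R : rcfType) (n m r L : nat)
  (A : 'M[R]_n) (B : 'M[R]_(n, m)) (C : 'M[R]_(r, n))
  (Ak : nat -> 'M[R]_m) (Bk : nat -> 'M[R]_(m, r))
  (Opinv : 'M[R]_(n, L * r))
  (x0 : 'cV[R]_n)
  (ud : nat -> 'cV[R]_m) (xd : nat -> 'cV[R]_n) (yd : nat -> 'cV[R]_r)
  (vI : nat -> 'cV[R]_(L * m + L * r)) (uI : nat -> 'cV[R]_m) (yI : nat -> 'cV[R]_r)
  (xc : nat -> 'cV[R]_n) (xic : nat -> 'cV[R]_(L * m))
  (uc : nat -> 'cV[R]_m) (yc : nat -> 'cV[R]_r) :
  (* standing assumptions *)
  minimal A B C -> schur A ->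
  (* rank O_L = n, Opinv = O_L^dagger *)
  \rank (obsvL L A C) = n ->
  is_pinv (obsvL L A C) Opinv ->
  (* a trajectory of Sigma_s (producing the IOH v(L)) *)
  xd 0%N = x0 ->
  (forall t, xd t.+1 = A *m xd t + B *m ud t) ->
  (forall t, yd t = C *m xd t) ->
  (* closed loop of the IOH system with u = K v, t >= L, started at v(L) *)
  vI L = ioh L ud yd L ->
  (forall t, (L <= t)%N ->
     vI t.+1 = ThetaM C (GammaM A B C Opinv) *m vI t + PiM R m r L *m uI t) ->
  (forall t, (L <= t)%N -> uI t = gainK L Ak Bk *m vI t) ->
  (forall t, (L <= t)%N -> yI t = C *m GammaM A B C Opinv *m vI t) ->
  (* feedback interconnection of Sigma_s and K_s, t >= 0 *)
  xc 0%N = x0 ->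
  xic 0%N = invmx (obsvL L (XiM L Ak) (OmegaM R m L))
            *m row_mx 1%:M
                 (- toepL L (XiM L Ak) (LambdaM L Bk) (OmegaM R m L))
            *m ioh L ud yd L ->
  (forall t, xc t.+1 = A *m xc t + B *m uc t) ->
  (forall t, yc t = C *m xc t) ->
  (forall t, xic t.+1 = XiM L Ak *m xic t + LambdaM L Bk *m yc t) ->
  (forall t, uc t = OmegaM R m L *m xic t) ->
  forall t, (L <= t)%N -> uI t = uc t /\ yI t = yc t.
Proof.
move=> _ _ rkO pinvO xd0 hxd hyd vIL hvI huI hyI xc0 xic0 hxc hyc hxic huc.
have xc_xd0 : xc 0%N = xd 0%N by rewrite xc0 xd0.
have ioh_L := ioh_interconnection hxd hyd xc_xd0 xic0 hxc hyc hxic huc.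
have arx := controller_arx hxic huc.
have state := GammaM_ioh hxc hyc rkO pinvO.
have vI_ioh k : vI (L + k)%N = ioh L uc yc (L + k).
  elim: k => [|k IH]; first by rewrite addn0 vIL ioh_L.
  rewrite addnS hvI ?leq_addr // huI ?leq_addr // IH -arx ?leq_addr // -ioh_succ ?leq_addr //.
  by rewrite state ?leq_addr // hyc.
move=> t hLt; rewrite -(subnKC hLt) huI ?hyI ?leq_addr // vI_ioh -arx ?leq_addr //.
by rewrite -mulmxA state ?leq_addr // hyc.
Qed.
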